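(* Let $p$ be a prime and $q$ a power of $p$. For every integer $m \ge p$ and every $d \in \mathbb{F}_q$, there exists a monic polynomial $f \in \mathbb{F}_q[x]$ of degree $m$ with $\operatorname{disc}(f) = d$.
   Context: For $f$ of degree $m\ge 2$ with leading coefficient $a_m$ and roots $\alpha_1,\dots,\alpha_m$ in a splitting field, $\operatorname{disc}(f) = a_m^{2m-2}\prod_{i<j}(\alpha_i-\alpha_j)^2$; for linear $f$, $\operatorname{disc}(f) = 1$. *)

From HB Require Import structures.
From mathcomp Require Import all_boot all_order all_algebra all_field.
Set Implicit Arguments. Unset Strict Implicit. Unset Printing Implicit Defensive.
Import GRing.Theory.
Local Open Scope ring_scope.

(* For linear f, disc f = 1. *)
Definition disc_roots (L : fieldType) (a : L) (rs : seq L) : L :=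
  a ^+ (2 * (size rs) - 2) *
  \prod_(i < size rs) \prod_(j < size rs | (i < j)%N) (rs`_i - rs`_j) ^+ 2.

Definition is_disc (F : fieldType) (f : {poly F}) (d : F) : Prop :=
  if size f == 2%N then d = 1
  else exists (L : fieldExtType F) (rs : seq L),
    map_poly (in_alg L) f = (lead_coef f)%:A%:P * \prod_(r <- rs) ('X - r%:P)
    /\ d%:A = disc_roots (lead_coef f)%:A rs.

(* The discriminant of a monic f of degree m with roots r_1, ..., r_m is
   (-1)^C(m,2) * prod_i f'(r_i).  As x |-> x^p is onto the finite field, it is
   enough to reach every c * w^p, for a fixed c != 0, as prod_i f'(r_i).
   If p | m, then f = X^m + a X^(m-p+1) + (-1)^m / a has f' = a X^(m-p) and
   prod_i r_i = 1 / a, whence prod_i f'(r_i) = a^p.  Otherwise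
   f = X^m + X^(m-p) + (1-u) X^p + 1 has f' = m X^(m-p-1) (X+1)^p, f(0) = 1 and
   f(-1) = u, whence prod_i f'(r_i) = m^m u^p with m != 0 in F. *)

From HB Require Import structures.
From mathcomp Require Import all_boot all_order all_algebra all_field.
From mathcomp Require Import ring zify.
Set Implicit Arguments. Unset Strict Implicit. Unset Printing Implicit Defensive.
Import GRing.Theory.
Local Open Scope ring_scope.

Lemma prod_pairs_const (R : comNzRingType) (n : nat) (c : R) :
  \prod_(i < n) \prod_(j < n | (i < j)%N) c = c ^+ 'C(n, 2).
Proof.
have inner (i : 'I_n) : \prod_(j < n | (i < j)%N) c = c ^+ (n - i.+1).
  by rewrite -prodr_const_nat big_geq_mkord.
under eq_bigr => i _ do rewrite inner.
rewrite prodrXr -bin2_sum big_mkord (reindex_inj rev_ord_inj) /=.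
by congr (c ^+ _); apply: eq_bigr => j _; rewrite subnSK ?subKn //; exact: ltnW.
Qed.

Lemma deriv_prod_XsubC (R : comNzRingType) n (s : 'I_n -> R) (i : 'I_n) :
  (\prod_(j < n) ('X - (s j)%:P))^`().[s i] =
  \prod_(j < n | j != i) (s i - s j).
Proof.
rewrite (bigD1 i) //= derivM derivXsubC mul1r !hornerE subrr mul0r addr0.
by rewrite horner_prod; apply: eq_bigr => j _; rewrite hornerXsubC.
Qed.

Lemma prod_pairs_sqr_sub (R : comNzRingType) (n : nat) (s : 'I_n -> R) :
  \prod_(i < n) \prod_(j < n | (i < j)%N) (s i - s j) ^+ 2 =
  (-1) ^+ 'C(n, 2) * \prod_(i < n) \prod_(j < n | j != i) (s i - s j).
Proof.
have split_ne (i : 'I_n) : \prod_(j < n | j != i) (s i - s j) =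
    \prod_(j < n | (i < j)%N) (s i - s j) *
    \prod_(j < n | (j < i)%N) (s i - s j).
  rewrite (bigID (fun j : 'I_n => (i < j)%N)) /=.
  by congr (_ * _); apply: eq_bigl => j; rewrite -val_eqE /=; case: ltngtP.
under [in RHS]eq_bigr => i _ do rewrite split_ne.
rewrite big_split /= [X in _ * (_ * X)](exchange_big_dep xpredT) //=.
rewrite -(prod_pairs_const _ (-1)) -!big_split /=.
apply: eq_bigr => i _; rewrite -!big_split /=; apply: eq_bigr => j _.
by rewrite mulN1r -mulrN opprB -expr2.
Qed.

Lemma disc_roots1E (L : fieldType) (rs : seq L) :
  disc_roots 1 rs =
  (-1) ^+ 'C(size rs, 2) *
  \prod_(r <- rs) (\prod_(x <- rs) ('X - x%:P))^`().[r].
Proof.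
rewrite /disc_roots expr1n mul1r (prod_pairs_sqr_sub (fun i => rs`_i)).
rewrite (big_nth 0) big_mkord (big_nth 0) big_mkord.
by congr (_ * _); apply: eq_bigr => i _; rewrite deriv_prod_XsubC.
Qed.

Lemma prod_seq_subC (R : comNzRingType) (rs : seq R) (x : R) :
  \prod_(r <- rs) (r - x) = (-1) ^+ size rs * (\prod_(r <- rs) ('X - r%:P)).[x].
Proof.
rewrite horner_prod; elim: rs => [|r rs IH]; first by rewrite !big_nil mulr1.
by rewrite !big_cons IH hornerXsubC exprS /=; ring.
Qed.

Lemma prodr_const_seq (R : comNzRingType) (I : Type) (rs : seq I) (c : R) :
  \prod_(r <- rs) c = c ^+ size rs.
Proof. by rewrite big_const_seq count_predT iter_mulr_1. Qed.

Section SplitPolynomial.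

Variables (F : fieldType) (L : fieldExtType F) (f : {poly F}) (rs : seq L).
Hypothesis f_split : map_poly (in_alg L) f = \prod_(r <- rs) ('X - r%:P).

Lemma size_split_roots : size rs = (size f).-1.
Proof. by rewrite -(size_map_poly (in_alg L)) f_split size_prod_XsubC. Qed.

Lemma prod_split_roots_sub (t : F) :
  \prod_(r <- rs) (r - in_alg L t) = in_alg L ((-1) ^+ size rs * f.[t]).
Proof. by rewrite prod_seq_subC -f_split horner_map rmorphM rmorph_sign. Qed.

Lemma prod_split_roots : \prod_(r <- rs) r = in_alg L ((-1) ^+ size rs * f.[0]).
Proof.
by rewrite -prod_split_roots_sub rmorph0; apply: eq_bigr => r _; rewrite subr0.
Qed.

Lemma is_disc_split (R : F) :
  f \is monic -> (2 < size f)%N ->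
  \prod_(r <- rs) (map_poly (in_alg L) f^`()).[r] = in_alg L R ->
  is_disc f ((-1) ^+ 'C((size f).-1, 2) * R).
Proof.
move=> f_monic f_gt2 prod_deriv; rewrite /is_disc gtn_eqF //.
exists L, rs; rewrite (monicP f_monic) scale1r mul1r; split => //.
rewrite disc_roots1E -f_split deriv_map prod_deriv size_split_roots.
by rewrite -[LHS]/(in_alg L _) rmorphM rmorph_sign.
Qed.

End SplitPolynomial.

Lemma monicXnD (R : nzRingType) (m : nat) (q : {poly R}) :
  (size q <= m)%N -> 'X^m + q \is monic.
Proof.
move=> q_small; apply/monicP.
by rewrite lead_coefDl ?lead_coefXn // size_polyXn.
Qed.

Lemma size_XnD (R : nzRingType) (m : nat) (q : {poly R}) :
  (size q <= m)%N -> size ('X^m + q) = m.+1.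
Proof. by move=> q_small; rewrite size_polyDl size_polyXn. Qed.

Section CharacteristicP.

Variables (F : fieldType) (p : nat).
Hypothesis pcharFp : p \in [pchar F].

Let p_gt1 : (1 < p)%N. Proof. exact/prime_gt1/(pcharf_prime pcharFp). Qed.

(* For [a = 0] the constant term is [(-1) ^+ m / 0 = 0]: the polynomial is then
   ['X^m], of discriminant [0 = a ^+ p]. *)
Definition disc_trinomial (m : nat) (a : F) : {poly F} :=
  'X^m + (a *: 'X^(m - p + 1) + ((-1) ^+ m / a)%:P).

Definition disc_quadrinomial (m : nat) (u : F) : {poly F} :=
  'X^m + ('X^(m - p) + (1 - u) *: 'X^p + 1).

Section Trinomial.

Variables (m : nat) (a : F).
Hypothesis le_p_m : (p <= m)%N.

Let m_gt0 : (0 < m)%N. Proof. exact: leq_trans (ltnW p_gt1) le_p_m. Qed.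

Let size_trinomial_tail :
  (size (a *: 'X^(m - p + 1) + ((-1) ^+ m / a)%:P)%R <= m)%N.
Proof.
apply: leq_trans (size_polyD _ _) _.
rewrite geq_max size_polyC (leq_trans (size_scale_leq _ _)) ?size_polyXn.
all: lia.
Qed.

Lemma disc_trinomial_monic : disc_trinomial m a \is monic.
Proof. exact: monicXnD. Qed.

Lemma size_disc_trinomial : size (disc_trinomial m a) = m.+1.
Proof. exact: size_XnD. Qed.

Lemma disc_trinomial_at0 : (disc_trinomial m a).[0] = (-1) ^+ m / a.
Proof.
rewrite !hornerD hornerZ !hornerXn hornerC !expr0n addn1.
by rewrite !gtn_eqF // mulr0 !add0r.
Qed.

Hypothesis p_dvd_m : (p %| m)%N.

Lemma deriv_disc_trinomial : (disc_trinomial m a)^`() = a *: 'X^(m - p).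
Proof.
have m0 : m%:R = 0 :> F by apply/eqP; rewrite -(dvdn_pcharf pcharFp).
have mp0 : (m - p)%:R = 0 :> F.
  by apply/eqP; rewrite -(dvdn_pcharf pcharFp) dvdn_sub.
rewrite !derivE -!scaler_nat m0 natrD mp0 add0r scale0r add0r scale1r addr0.
by rewrite addn1.
Qed.

Lemma prod_deriv_disc_trinomial (L : fieldExtType F) (rs : seq L) :
  map_poly (in_alg L) (disc_trinomial m a) = \prod_(r <- rs) ('X - r%:P) ->
  \prod_(r <- rs) (map_poly (in_alg L) (disc_trinomial m a)^`()).[r] =
  in_alg L (a ^+ p).
Proof.
move=> f_split; have size_rs := size_split_roots f_split.
rewrite size_disc_trinomial /= in size_rs.
rewrite deriv_disc_trinomial map_polyZ map_polyXn.
under eq_bigr => r _ do rewrite hornerZ hornerXn.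
rewrite big_split /= prodr_const_seq prodrXl (prod_split_roots f_split) size_rs.
rewrite -in_algE -!rmorphXn -rmorphM disc_trinomial_at0.
rewrite mulrA -expr2 sqrr_sign mul1r.
congr (in_alg L _); have [->|a_neq0] := eqVneq a 0.
  by rewrite invr0 !expr0n (gtn_eqF m_gt0) (gtn_eqF (ltnW p_gt1)) mul0r.
by rewrite exprVn -{1}(subnK le_p_m) exprD mulrAC mulfV ?mul1r // expf_neq0.
Qed.

End Trinomial.

Section Quadrinomial.

Variables (m : nat) (u : F).
Hypothesis lt_p_m : (p < m)%N.

Let m_gt0 : (0 < m)%N. Proof. exact: leq_ltn_trans (leq0n p) lt_p_m. Qed.

Let size_quadrinomial_tail : (size ('X^(m - p) + (1 - u) *: 'X^p + 1)%R <= m)%N.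
Proof.
apply: leq_trans (size_polyD _ _) _; rewrite geq_max size_poly1.
apply/andP; split; last exact: m_gt0.
apply: leq_trans (size_polyD _ _) _.
by rewrite geq_max (leq_trans (size_scale_leq _ _)) ?size_polyXn; lia.
Qed.

Lemma disc_quadrinomial_monic : disc_quadrinomial m u \is monic.
Proof. exact: monicXnD. Qed.

Lemma size_disc_quadrinomial : size (disc_quadrinomial m u) = m.+1.
Proof. exact: size_XnD. Qed.

Lemma deriv_disc_quadrinomial :
  (disc_quadrinomial m u)^`() = m%:R *: ('X^(m - p - 1) * ('X + 1) ^+ p).
Proof.
have pcharXp : p \in [pchar {poly F}] by rewrite pchar_poly.
have frobX : ('X + 1 : {poly F}) ^+ p = 'X^p + 1.
  by rewrite -(pFrobenius_autE pcharXp) rmorphD rmorph1.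
rewrite frobX mulrDr mulr1 -exprD.
have -> : (m - p - 1 + p = m.-1)%N by lia.
rewrite !derivE -!scaler_nat (pcharf0 pcharFp).
rewrite natrB ?(pcharf0 pcharFp) 1?ltnW //.
by rewrite subr0 scale0r scaler0 !addr0 scalerDr subn1.
Qed.

Lemma disc_quadrinomial_at0 : (disc_quadrinomial m u).[0] = 1.
Proof.
rewrite !hornerD hornerZ !hornerXn hornerC !expr0n.
rewrite !gtn_eqF ?subn_gt0 ?(ltnW p_gt1) //.
by rewrite mulr0 !add0r.
Qed.

Lemma disc_quadrinomial_atN1 : (disc_quadrinomial m u).[-1] = u.
Proof.
have N1p : (-1) ^+ p = -1 :> F by rewrite -(pFrobenius_autE pcharFp) rmorphN1.
rewrite !hornerD hornerZ !hornerXn hornerC -{1}(subnK (ltnW lt_p_m)) exprD N1p.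
by ring.
Qed.

Lemma prod_deriv_disc_quadrinomial (L : fieldExtType F) (rs : seq L) :
  map_poly (in_alg L) (disc_quadrinomial m u) = \prod_(r <- rs) ('X - r%:P) ->
  \prod_(r <- rs) (map_poly (in_alg L) (disc_quadrinomial m u)^`()).[r] =
  in_alg L (m%:R ^+ m * u ^+ p).
Proof.
move=> f_split; have size_rs := size_split_roots f_split.
rewrite size_disc_quadrinomial /= in size_rs.
have shift1 (r : L) : r + 1 = r - in_alg L (-1) by rewrite rmorphN1 opprK.
rewrite deriv_disc_quadrinomial map_polyZ rmorphM /= map_polyXn rmorphXn /=.
rewrite rmorphD /= map_polyX rmorph1.
under eq_bigr => r _ do
  rewrite hornerZ hornerM hornerXn horner_exp hornerD hornerX hornerC shift1.
rewrite !big_split /= prodr_const_seq !prodrXl (prod_split_roots f_split).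
rewrite (prod_split_roots_sub f_split) size_rs.
rewrite disc_quadrinomial_at0 disc_quadrinomial_atN1.
rewrite -in_algE -!rmorphXn -!rmorphM; congr (in_alg L (_ * _)).
(* the signs contribute ((-1) ^+ m) ^+ m.-1 = 1, as m * m.-1 is even *)
rewrite mulr1 exprMn mulrA -exprD.
have -> : (m - p - 1 + p = m.-1)%N by lia.
rewrite -exprM -signr_odd oddM; case: (m) m_gt0 => // m' _ /=.
by rewrite andNb mul1r.
Qed.

End Quadrinomial.

End CharacteristicP.

Section FiniteField.

Variable F : finFieldType.

Lemma finField_expp_onto (p : nat) :
  p \in [pchar F] -> forall y : F, exists x, x ^+ p = y.
Proof.
move=> pcharFp y.
have [g _ gK] := injF_bij (fmorph_inj (pFrobenius_aut pcharFp)).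
by exists (g y); rewrite -(pFrobenius_autE pcharFp) gK.
Qed.

Lemma finField_is_disc_monic (f : {poly F}) (R : F) :
  f \is monic -> (2 < size f)%N ->
  (forall (L : fieldExtType F) (rs : seq L),
     map_poly (in_alg L) f = \prod_(r <- rs) ('X - r%:P) ->
     \prod_(r <- rs) (map_poly (in_alg L) f^`()).[r] = in_alg L R) ->
  is_disc f ((-1) ^+ 'C((size f).-1, 2) * R).
Proof.
move=> f_monic f_gt2 prod_deriv.
have [L [rs f_eq _]] := FinSplittingFieldFor (monic_neq0 f_monic).
have f_split : map_poly (in_alg L) f = \prod_(r <- rs) ('X - r%:P).
  by apply/eqP; rewrite -eqp_monic ?map_monic ?monic_prod_XsubC.
exact: (is_disc_split f_split f_monic f_gt2 (prod_deriv L rs f_split)).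
Qed.

End FiniteField.

Theorem theorem6p1 (p : nat) (F : finFieldType) (q : nat) :
  prime p -> p \in [pchar F] -> #|F| = q ->
  forall (m : nat), (p <= m)%N ->
  forall d : F, exists f : {poly F},
    f \is monic /\ size f = m.+1 /\ is_disc f d.
Proof.
move=> p_prime pcharFp _ m le_p_m d.
have m_gt1 : (1 < m)%N := leq_trans (prime_gt1 p_prime) le_p_m.
have [p_dvd_m | p_ndvd_m] := boolP (p %| m)%N.
  have [a a_p] := finField_expp_onto pcharFp ((-1) ^+ 'C(m, 2) * d).
  have f_size := size_disc_trinomial pcharFp a le_p_m.
  exists (disc_trinomial p m a).
  split; [exact: disc_trinomial_monic | split => //].
  have := finField_is_disc_monic (disc_trinomial_monic pcharFp a le_p_m)
    _ (prod_deriv_disc_trinomial pcharFp le_p_m p_dvd_m).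
  by rewrite f_size a_p signrMK; apply.
have lt_p_m : (p < m)%N.
  by rewrite ltn_neqAle le_p_m andbT; apply: contraNneq p_ndvd_m => ->.
have m_neq0 : m%:R != 0 :> F by rewrite -(dvdn_pcharf pcharFp).
have [u u_p] :=
  finField_expp_onto pcharFp ((-1) ^+ 'C(m, 2) * d / m%:R ^+ m).
have f_size := size_disc_quadrinomial pcharFp u lt_p_m.
exists (disc_quadrinomial p m u).
split; [exact: disc_quadrinomial_monic | split => //].
have := finField_is_disc_monic (disc_quadrinomial_monic pcharFp u lt_p_m)
  _ (prod_deriv_disc_quadrinomial pcharFp lt_p_m).
by rewrite f_size u_p [_ * (_ / _)]mulrC divfK ?expf_neq0 // signrMK; apply.
Qed.
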